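(* Let $\kappa$ be a cardinal and let $B$ be the set of elements of order exactly $2$ in the group $(\mathbb{R}/\mathbb{Z})^{\oplus\kappa}$. Then $B$, with the partial operation induced from the group, is strongly IP-regular.
   Context: $(\mathbb{R}/\mathbb{Z})^{\oplus\kappa}$ is the direct sum of $\kappa$ copies of the circle group $\mathbb{R}/\mathbb{Z}$, written additively. A subset $X$ carries the induced partial operation: $x+y$ is defined in $X$ iff $x,y,x+y\in X$. For a sequence $\vec{x}=(x_n)_{n\in\omega}$ in $X$ all of whose finite sums $\sum_{i\in a}x_i$ ($a$ finite nonempty subset of $\omega$) lie in $X$, $\mathrm{FS}(\vec{x})$ is the set of these sums and $\mathrm{FS}_1(\vec{x})=\mathrm{FS}((x_{n+1})_n)$; an IP-set of $X$ is a subset containing such an $\mathrm{FS}(\vec{x})$. $X$ is strongly IP-regular if for every such sequence $\vec{x}$, $x_0+\mathrm{FS}_1(\vec{x})$ is not an IP-set. *)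

From Stdlib Require Import Reals List.
Import ListNotations.
Open Scope R_scope.

(* The circle group R/Z is represented by the canonical representatives in
   [0,1), with addition  a (+) b = frac_part (a + b).
   The direct sum (R/Z)^{(+) kappa} over an index type I (of cardinality kappa)
   is represented by functions f : I -> R with values in [0,1) and finite
   support; the group operation is coordinatewise. *)

Definition circ_add (a b : R) : R := frac_part (a + b).

Definition DS (I : Type) (f : I -> R) : Prop :=
  (forall i, 0 <= f i < 1) /\ exists l : list I, forall i, f i <> 0 -> In i l.

Definition ds_zero (I : Type) : I -> R := fun _ => 0.

Definition ds_add (I : Type) (f g : I -> R) : I -> R := fun i => circ_add (f i) (g i).

Definition order2 (I : Type) (f : I -> R) : Prop :=
  DS I f /\ f <> ds_zero I /\ ds_add I f f = ds_zero I.

(* Finite sums of a sequence x indexed by a finite set a of naturals,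
   given as a duplicate-free list. *)
Definition fsum (I : Type) (x : nat -> I -> R) (a : list nat) : I -> R :=
  fold_right (fun n acc => ds_add I (x n) acc) (ds_zero I) a.

Definition FS_in (I : Type) (X : (I -> R) -> Prop) (x : nat -> I -> R) : Prop :=
  forall a : list nat, a <> [] -> NoDup a -> X (fsum I x a).

Definition FS (I : Type) (x : nat -> I -> R) (s : I -> R) : Prop :=
  exists a : list nat, a <> [] /\ NoDup a /\ s = fsum I x a.

Definition IPset (I : Type) (X A : (I -> R) -> Prop) : Prop :=
  (forall s, A s -> X s) /\
  exists y : nat -> I -> R, FS_in I X y /\ forall s, FS I y s -> A s.

Definition strongly_IP_regular (I : Type) (X : (I -> R) -> Prop) : Prop :=
  forall x : nat -> I -> R, FS_in I X x ->
    ~ IPset I X (fun s => exists t, FS I (fun n => x (S n)) t /\ s = ds_add I (x O) t).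

From Stdlib Require Import Reals List Lra Lia ZArith FunctionalExtensionality.
Import ListNotations.
Open Scope R_scope.

(* Work with real representatives and congruence modulo Z.
   Suppose x_0 + FS_1(x) contains FS(y) for a sequence y with FS(y) inside
   the set B of elements of order 2.  Then y_0, y_1 and y_0 + y_1 are each
   congruent to x_0 plus a finite sum of x_1, x_2, ...: say with index lists
   a0, a1, a2.  Adding the three congruences, x_0 + Σa0 + Σa1 + Σa2 is
   congruent to 2y_0 + 2y_1 - 2x_0, which is 0 since all x_n, y_n are
   2-torsion.  Since 2x_n = 0, the multiset of indices 0, a0, a1, a2 can be
   reduced to the set of indices occurring an odd number of times; this set
   contains 0 (which occurs once) and is nonempty, so the corresponding finite
   sum of x is an element of B that is congruent to 0, i.e. equal to 0 --
   contradicting that elements of B are nonzero. *)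

Definition isZ (r : R) : Prop := exists k : Z, r = IZR k.

Ltac zsolve :=
  repeat (rewrite plus_IZR || rewrite minus_IZR || rewrite opp_IZR || rewrite mult_IZR);
  lra.

Lemma isZ_int01 (r : R) : isZ r -> 0 <= r < 1 -> r = 0.
Proof.
  intros [k ->] [H1 H2].
  apply le_IZR in H1. apply lt_IZR in H2.
  assert (k = 0%Z) by lia. subst. reflexivity.
Qed.

Lemma ds_add_congr (I : Type) (f g : I -> R) (i : I) :
  isZ (ds_add I f g i - f i - g i).
Proof.
  unfold ds_add, circ_add, frac_part. exists (- Int_part (f i + g i))%Z. zsolve.
Qed.

Fixpoint rsum (I : Type) (x : nat -> I -> R) (l : list nat) (i : I) : R :=
  match l with [] => 0 | n :: t => x n i + rsum I x t i end.

Lemma rsum_app (I : Type) (x : nat -> I -> R) (u v : list nat) (i : I) :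
  rsum I x (u ++ v) i = rsum I x u i + rsum I x v i.
Proof. induction u as [|n u IH]; simpl; [lra | rewrite IH; lra]. Qed.

Lemma rsum_map_S (I : Type) (x : nat -> I -> R) (a : list nat) (i : I) :
  rsum I x (map S a) i = rsum I (fun n => x (S n)) a i.
Proof. induction a as [|n a IH]; simpl; [reflexivity | rewrite IH; reflexivity]. Qed.

Lemma fsum_congr (I : Type) (x : nat -> I -> R) (l : list nat) (i : I) :
  isZ (fsum I x l i - rsum I x l i).
Proof.
  induction l as [|n t [k Hk]]; simpl.
  - exists 0%Z. unfold ds_zero. simpl. lra.
  - destruct (ds_add_congr I (x n) (fsum I x t) i) as [k' Hk'].
    exists (k + k')%Z. zsolve.
Qed.

Lemma fsum_range (I : Type) (x : nat -> I -> R) (l : list nat) (i : I) :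
  0 <= fsum I x l i < 1.
Proof.
  destruct l as [|n l]; simpl.
  - unfold ds_zero. lra.
  - unfold ds_add, circ_add. destruct (base_fp (x n i + fsum I x l i)). lra.
Qed.

Lemma parity_reduction (I : Type) (x : nat -> I -> R)
  (Htors : forall n i, isZ (x n i + x n i)) (l : list nat) :
  exists l', NoDup l' /\
    (forall m, In m l' <-> Nat.odd (count_occ Nat.eq_dec l m) = true) /\
    forall i, isZ (rsum I x l i - rsum I x l' i).
Proof.
  induction l as [|n t [t' [Hnd [Hin Hs]]]].
  { exists []. split; [constructor | split].
    - intros m; simpl. split; [tauto | discriminate].
    - intros i; exists 0%Z; simpl; lra. }
  destruct (in_dec Nat.eq_dec n t') as [Hn | Hn].
  - (* n already has odd multiplicity: the two copies of x_n cancel. *)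
    destruct (in_split _ _ Hn) as [u [v ->]].
    exists (u ++ v). split; [eapply NoDup_remove_1; eauto | split].
    + intros m. destruct (Nat.eq_dec n m) as [<- | Hne].
      * rewrite count_occ_cons_eq, Nat.odd_succ, <- Nat.negb_odd, (proj1 (Hin n) Hn)
          by reflexivity.
        split; [intro Hc; exfalso; eapply NoDup_remove_2; eauto | discriminate].
      * rewrite count_occ_cons_neq, <- Hin by exact Hne.
        rewrite !in_app_iff. simpl. intuition.
    + intros i. destruct (Hs i) as [k Hk]. destruct (Htors n i) as [k' Hk'].
      exists (k + k')%Z. simpl. rewrite rsum_app in *. simpl in Hk. zsolve.
  -
    exists (n :: t'). split; [constructor; assumption | split].
    + intros m. destruct (Nat.eq_dec n m) as [<- | Hne].
      * rewrite count_occ_cons_eq, Nat.odd_succ, <- Nat.negb_odd by reflexivity.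
        destruct (Nat.odd (count_occ Nat.eq_dec t n)) eqn:E.
        -- exfalso. apply Hn, Hin, E.
        -- simpl. tauto.
      * rewrite count_occ_cons_neq, <- Hin by exact Hne. simpl. intuition.
    + intros i. destruct (Hs i) as [k Hk]. exists k. simpl. lra.
Qed.

Lemma order2_torsion (I : Type) (f : I -> R) (i : I) :
  order2 I f -> isZ (f i + f i).
Proof.
  intros [_ [_ H]]. assert (H' := f_equal (fun g => g i) H).
  unfold ds_add, circ_add, frac_part, ds_zero in H'.
  exists (Int_part (f i + f i)). lra.
Qed.

Lemma order2_not_integral (I : Type) (f : I -> R) :
  order2 I f -> (forall i, 0 <= f i < 1) -> ~ (forall i, isZ (f i)).
Proof.
  intros [_ [Hnz _]] Hrange Hint. apply Hnz.
  extensionality i. exact (isZ_int01 _ (Hint i) (Hrange i)).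
Qed.

Lemma FS_in_order2_torsion (I : Type) (x : nat -> I -> R) :
  FS_in I (order2 I) x -> forall n i, isZ (x n i + x n i).
Proof.
  intros Hx n i.
  assert (Hn := Hx [n] ltac:(discriminate) (NoDup_cons _ (@in_nil _ _) (NoDup_nil _))).
  destruct (order2_torsion I _ i Hn) as [k Hk].
  destruct (fsum_congr I x [n] i) as [k' Hk']. cbn [rsum] in Hk'.
  exists (k - k' - k')%Z. zsolve.
Qed.

Lemma translate_representation (I : Type) (x y : nat -> I -> R) :
  (forall s, FS I y s ->
     exists t, FS I (fun n => x (S n)) t /\ s = ds_add I (x O) t) ->
  forall b, b <> [] -> NoDup b ->
  exists a, forall i, isZ (rsum I y b i - x O i - rsum I (fun n => x (S n)) a i).
Proof.
  intros HA b Hb Hnb.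
  destruct (HA (fsum I y b)) as [t [[a [_ [_ ->]]] Ht]]; [exists b; auto |].
  exists a. intros i.
  destruct (fsum_congr I y b i) as [k1 H1].
  destruct (fsum_congr I (fun n => x (S n)) a i) as [k2 H2].
  destruct (ds_add_congr I (x O) (fsum I (fun n => x (S n)) a) i) as [k3 H3].
  rewrite Ht in H1. exists (k3 - k1 + k2)%Z. zsolve.
Qed.

Lemma three_representations_cancel (I : Type) (x y : nat -> I -> R)
  (a0 a1 a2 : list nat) (i : I) :
  isZ (x O i + x O i) -> isZ (y O i + y O i) -> isZ (y 1%nat i + y 1%nat i) ->
  isZ (rsum I y [0%nat] i - x O i - rsum I (fun n => x (S n)) a0 i) ->
  isZ (rsum I y [1%nat] i - x O i - rsum I (fun n => x (S n)) a1 i) ->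
  isZ (rsum I y [0%nat; 1%nat] i - x O i - rsum I (fun n => x (S n)) a2 i) ->
  isZ (rsum I x (0%nat :: map S (a0 ++ a1 ++ a2)) i).
Proof.
  intros [z0 Z0] [z1 Z1] [z2 Z2] [e0 E0] [e1 E1] [e2 E2].
  simpl in E0, E1, E2 |- *. rewrite rsum_map_S, !rsum_app.
  exists (z1 + z2 - z0 - e0 - e1 - e2)%Z. zsolve.
Qed.

Theorem mainTheorem8 (I : Type) : strongly_IP_regular I (order2 I).
Proof.
  intros x Hx [_ [y [Hy HA]]].
  pose proof (FS_in_order2_torsion I x Hx) as Hxt.
  pose proof (FS_in_order2_torsion I y Hy) as Hyt.
  assert (Hsingle : forall n : nat, NoDup [n])
    by (intro n; exact (NoDup_cons _ (@in_nil _ _) (NoDup_nil _))).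
  assert (H01 : NoDup [0%nat; 1%nat])
    by (constructor; [simpl; intuition discriminate | apply Hsingle]).
  destruct (translate_representation I x y HA [0%nat] ltac:(discriminate) (Hsingle _))
    as [a0 E0].
  destruct (translate_representation I x y HA [1%nat] ltac:(discriminate) (Hsingle _))
    as [a1 E1].
  destruct (translate_representation I x y HA [0%nat; 1%nat] ltac:(discriminate) H01)
    as [a2 E2].
  destruct (parity_reduction I x Hxt (0%nat :: map S (a0 ++ a1 ++ a2)))
    as [l [Hnd [Hodd Hred]]].
  assert (H0l : In 0%nat l).
  { assert (H0 : ~ In 0%nat (map S (a0 ++ a1 ++ a2)))
      by (intro Hc; apply in_map_iff in Hc; destruct Hc as [? [? _]]; discriminate).
    apply Hodd. rewrite count_occ_cons_eq by reflexivity.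
    rewrite (proj1 (count_occ_not_In _ _ _) H0). reflexivity. }
  assert (Hl : l <> []) by (intros ->; destruct H0l).
  apply (order2_not_integral I (fsum I x l) (Hx l Hl Hnd) (fsum_range I x l)).
  intro i.
  destruct (three_representations_cancel I x y a0 a1 a2 i (Hxt O i) (Hyt O i)
              (Hyt 1%nat i) (E0 i) (E1 i) (E2 i)) as [k K].
  destruct (Hred i) as [k1 K1]. destruct (fsum_congr I x l i) as [k2 K2].
  exists (k2 - k1 + k)%Z. zsolve.
Qed.
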